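(* Let $m=n=1$, $\boldsymbol s=(s_1,s_2)\in\{(1,-1),(-1,1)\}$ and $\tilde{\boldsymbol s}=(s_2,s_1)$. Let $\boldsymbol\lambda$ be typical, $\boldsymbol z$ $h$-generic, let $y$ be a polynomial of degree $l$ representing a solution of the BAE associated to $\boldsymbol s,\boldsymbol\lambda,\boldsymbol z,l$, and let $\tilde y$ be the polynomial with $y\,\tilde y[-s_1]=\varphi^{\boldsymbol s}-\psi^{\boldsymbol s}$. Then \[s_1\frac{T_1^{\boldsymbol s}y[s_1]}{T_1^{\boldsymbol s}[s_1]y}+s_2\frac{T_2^{\boldsymbol s}y[-s_2]}{T_2^{\boldsymbol s}[s_2]y}=\tilde s_1\frac{T_1^{\tilde{\boldsymbol s}}\tilde y[\tilde s_1]}{T_1^{\tilde{\boldsymbol s}}[\tilde s_1]\tilde y}+\tilde s_2\frac{T_2^{\tilde{\boldsymbol s}}\tilde y[-\tilde s_2]}{T_2^{\tilde{\boldsymbol s}}[\tilde s_2]\tilde y}.\]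
   Context: Fix $h\in\mathbb{C}^\times$; $f[i](x)=f(x-ih)$. Polynomial $\mathfrak{gl}_{1|1}$ weights $\lambda^{(1)},\dots,\lambda^{(p)}$; for each $k$ write the weight of $\lambda^{(k)}$ with respect to $\boldsymbol s$ (eigenvalues of $e_{\sigma(1)\sigma(1)},e_{\sigma(2)\sigma(2)}$ on the $\boldsymbol s$-highest weight vector of $L_{\lambda^{(k)}}$, where $\sigma$ is the identity if $\boldsymbol s=(1,-1)$ and the transposition if $\boldsymbol s=(-1,1)$) as $(a_k,b_k)$, $a_k,b_k\in\mathbb{Z}_{\ge0}$, with $b_k=0$ whenever $a_k=0$. $\lambda^{(k)}$ is typical iff $a_k+b_k\ne0$; $\boldsymbol\lambda$ is typical if some $\lambda^{(k)}$ is typical. Set $\tilde a_k=b_k+1,\tilde b_k=a_k-1$ if $a_k+b_k\ne0$ and $\tilde a_k=\tilde b_k=0$ otherwise (these are the weights with respect to $\tilde{\boldsymbol s}$). $\boldsymbol z$ $h$-generic ($z_i-z_j\notin h\mathbb{Z}$). $T_1^{\boldsymbol s}=\prod_k\prod_{j=1}^{a_k}(x-z_k+s_1jh)$, $T_2^{\boldsymbol s}=\prod_k\prod_{j=1}^{b_k}(x-z_k+s_2jh)$, $T_1^{\tilde{\boldsymbol s}}=\prod_k\prod_{j=1}^{\tilde a_k}(x-z_k+\tilde s_1jh)$, $T_2^{\tilde{\boldsymbol s}}=\prod_k\prod_{j=1}^{\tilde b_k}(x-z_k+\tilde s_2jh)$. $\varphi^{\boldsymbol s}=\prod_{k:a_k+b_k\ne0}(x-z_k+s_1a_kh)$,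 $\psi^{\boldsymbol s}=\prod_{k:a_k+b_k\ne0}(x-z_k+s_2b_kh)$. The BAE associated to $\boldsymbol s,\boldsymbol\lambda,\boldsymbol z,l$ in $t_1,\dots,t_l$: $\prod_{k:a_k+b_k\ne0}\frac{t_j-z_k+s_1a_kh}{t_j-z_k+s_2b_kh}=1$, $j=1,\dots,l$, with the requirement that a root of multiplicity $r$ of this equation appears at most $r$ times among the $t_j$; $y=\prod_j(x-t_j)$ represents $(t_1,\dots,t_l)$. *)

From mathcomp Require Import all_boot all_algebra.
From mathcomp Require Import complex.
From mathcomp Require Import Rstruct.
Set Implicit Arguments. Unset Strict Implicit. Unset Printing Implicit Defensive.
Import GRing.Theory.
Local Open Scope ring_scope.

Definition CC : fieldType := complex Rdefinitions.R.

Notation ratfun := {fraction {poly CC}}.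
Definition rf (p : {poly CC}) : ratfun := FracField.tofrac p.

(* f[i](x) = f(x - i h), for i an integer. *)
Definition shift (h : CC) (i : int) (f : {poly CC}) : {poly CC} :=
  f \Po ('X - (i%:~R * h)%:P).

(* s = (s1, s2) encoded by a boolean: true <-> s = (1,-1), false <-> s = (-1,1). *)
Definition s1 (b : bool) : int := if b then 1 else -1.
Definition s2 (b : bool) : int := - s1 b.
(* tilde s = (s2, s1) corresponds to negb b. *)

Section Data.
Variables (p : nat) (a b : 'I_p -> nat) (z : 'I_p -> CC) (h : CC).

Definition typicalk (k : 'I_p) : bool := (a k + b k != 0)%N.
Definition typical : Prop := exists k, typicalk k.

(* weights with respect to tilde s *)
Definition at_ (k : 'I_p) : nat := if typicalk k then (b k).+1 else 0%N.
Definition bt_ (k : 'I_p) : nat := if typicalk k then (a k).-1 else 0%N.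

Definition Tpoly (c : int) (n : 'I_p -> nat) : {poly CC} :=
  \prod_(k < p) \prod_(1 <= j < (n k).+1)
     ('X - (z k)%:P + (c%:~R * j%:R * h)%:P).

Definition phi (bs : bool) : {poly CC} :=
  \prod_(k < p | typicalk k) ('X - (z k)%:P + ((s1 bs)%:~R * (a k)%:R * h)%:P).
Definition psi (bs : bool) : {poly CC} :=
  \prod_(k < p | typicalk k) ('X - (z k)%:P + ((s2 bs)%:~R * (b k)%:R * h)%:P).

Definition BAE_solution (bs : bool) (l : nat) (t : 'I_l -> CC) : Prop :=
  forall j : 'I_l,
    (forall k, typicalk k -> t j - z k + (s2 bs)%:~R * (b k)%:R * h != 0) /\
    \prod_(k < p | typicalk k)
       ((t j - z k + (s1 bs)%:~R * (a k)%:R * h) /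
        (t j - z k + (s2 bs)%:~R * (b k)%:R * h)) = 1 /\
    (* a root of multiplicity r of the equation appears at most r times *)
    (#|[pred i : 'I_l | t i == t j]| <= mup (t j) (phi bs - psi bs))%N.

End Data.

Definition h_generic (p : nat) (z : 'I_p -> CC) (h : CC) : Prop :=
  forall i j : 'I_p, i != j -> forall n : int, z i - z j != n%:~R * h.

Definition weights_ok (p : nat) (a b : 'I_p -> nat) : Prop :=
  forall k, a k = 0%N -> b k = 0%N.

From HB Require Import structures.
From mathcomp Require Import all_boot all_algebra.
From mathcomp Require Import complex.
From mathcomp Require Import ring.
Import GRing.Theory.
Local Open Scope ring_scope.

(* Write D = prod_k (x - z_k).  Telescoping in j gives
   T_c(n) D = T_c(n)[c] prod_k (x - z_k + c n_k h), so each of the four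
   quotients is (a product of linear factors) / D times a quotient of shifts
   of y or ytil.  For s these products are phi N and psi N, N being the
   product over the atypical k; since the tilde weights are (b_k + 1, a_k - 1)
   with signs (-s1, s1), for tilde s they are psi[s1] N and phi[s1] N.  Both
   sides therefore equal s1 (N / D) y[s1] ytil[-s1], using y ytil[-s1] =
   phi - psi and its shift by s1. *)

Local Notation lin u v := ('X - u%:P + v%:P).

HB.instance Definition _ h i :=
  GRing.RMorphism.copy (shift h i) (comp_poly ('X - (i%:~R * h)%:P)).

Lemma s1N bs : s1 (~~ bs) = - s1 bs. Proof. by case: bs. Qed.
Lemma s2N bs : s2 (~~ bs) = s1 bs. Proof. by case: bs. Qed.

Section Shift.
Variable h : CC.

Lemma shift_lin c u v : shift h c (lin u v) = lin u (v - c%:~R * h).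
Proof.
by rewrite /shift comp_polyD comp_polyB comp_polyX !comp_polyC polyCB; ring.
Qed.

Lemma shiftK c : cancel (shift h (- c)) (shift h c).
Proof.
move=> f; rewrite /shift -comp_polyA comp_polyB comp_polyX comp_polyC.
by rewrite intrN mulNr polyCN opprK subrK comp_polyXr.
Qed.

Lemma shift_eq0 c f : (shift h c f == 0) = (f == 0).
Proof. by rewrite /shift comp_poly2_eq0 // size_XsubC. Qed.

Lemma shift_factors_telescope c u n :
  \prod_(1 <= j < n.+1) lin u (c%:~R * j%:R * h) * ('X - u%:P)
  = shift h c (\prod_(1 <= j < n.+1) lin u (c%:~R * j%:R * h))
    * lin u (c%:~R * n%:R * h).
Proof.
have shift_step j :
    shift h c (lin u (c%:~R * j.+1%:R * h)) = lin u (c%:~R * j%:R * h).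
  by rewrite shift_lin mulrSr; congr (lin _ _); ring.
rewrite rmorph_prod !big_add1 /= [in RHS](eq_bigr _ (fun j _ => shift_step j)).
rewrite -big_nat_recr //= big_nat_recl // mulr0n mulr0 mul0r polyC0 addr0.
by rewrite mulrC.
Qed.

End Shift.

Lemma ratio_cancel (K : fieldType) (t ts d q x y : K) :
  ts != 0 -> d != 0 -> t * d = ts * q -> t * x / (ts * y) = q / d * (x / y).
Proof.
move=> ts0 d0 tdE; rewrite invfM mulrACA; congr (_ * _).
by apply/eqP; rewrite eqr_div // tdE mulrC.
Qed.

Section Tpoly.
Variables (p : nat) (z : 'I_p -> CC) (h : CC).

Lemma Tpoly_telescope c n :
  Tpoly z h c n * \prod_(k < p) ('X - (z k)%:P)
  = shift h c (Tpoly z h c n) * \prod_(k < p) lin (z k) (c%:~R * (n k)%:R * h).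
Proof.
rewrite /Tpoly rmorph_prod -!big_split /=.
by apply: eq_bigr => k _; apply: shift_factors_telescope.
Qed.

Lemma Tpoly_neq0 c n : Tpoly z h c n != 0.
Proof.
apply/prodf_neq0 => k _; rewrite prodf_seq_neq0; apply/allP => j _.
by rewrite -addrA -polyCN -polyCD -size_poly_eq0 size_XaddC.
Qed.

Lemma Tpoly_ratio c n X Y :
  rf (Tpoly z h c n * X) / rf (shift h c (Tpoly z h c n) * Y)
  = rf (\prod_(k < p) lin (z k) (c%:~R * (n k)%:R * h))
    / rf (\prod_(k < p) ('X - (z k)%:P)) * (rf X / rf Y).
Proof.
rewrite /rf !tofracM; apply: ratio_cancel; rewrite ?tofrac_eq0 ?shift_eq0.
- exact: Tpoly_neq0.
- exact/monic_neq0/monic_prod_XsubC.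
- by rewrite -!tofracM Tpoly_telescope.
Qed.

End Tpoly.

Section TypicalFactors.
Variables (p : nat) (a b : 'I_p -> nat) (z : 'I_p -> CC) (h : CC) (bs : bool).
Let N := \prod_(k < p | ~~ typicalk a b k) ('X - (z k)%:P).

Lemma atypical_weights k : ~~ typicalk a b k -> a k = 0%N /\ b k = 0%N.
Proof. by rewrite /typicalk negbK addn_eq0 => /andP[/eqP-> /eqP->]. Qed.

Lemma prod_lin_typical c (n : 'I_p -> nat) (F : 'I_p -> {poly CC}) :
  (forall k, ~~ typicalk a b k -> n k = 0%N) ->
  (forall k, typicalk a b k -> lin (z k) (c%:~R * (n k)%:R * h) = F k) ->
  \prod_(k < p) lin (z k) (c%:~R * (n k)%:R * h)
  = \prod_(k < p | typicalk a b k) F k * N.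
Proof.
move=> n0 nF; rewrite (bigID (typicalk a b)) /=; congr (_ * _).
  exact: eq_bigr.
by apply: eq_bigr => k /n0->; rewrite mulr0 mul0r addr0.
Qed.

Lemma prod_lin_phi :
  \prod_(k < p) lin (z k) ((s1 bs)%:~R * (a k)%:R * h) = phi a b z h bs * N.
Proof. by apply: prod_lin_typical => // k /atypical_weights[]. Qed.

Lemma prod_lin_psi :
  \prod_(k < p) lin (z k) ((s2 bs)%:~R * (b k)%:R * h) = psi a b z h bs * N.
Proof. by apply: prod_lin_typical => // k /atypical_weights[]. Qed.

Lemma prod_lin_tilde_psi :
  \prod_(k < p) lin (z k) ((s1 (~~ bs))%:~R * (at_ a b k)%:R * h)
  = shift h (s1 bs) (psi a b z h bs) * N.
Proof.
rewrite rmorph_prod /=; apply: prod_lin_typical => k tk.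
  by rewrite /at_ (negbTE tk).
by rewrite /at_ tk shift_lin mulrSr s1N /s2 !intrN; congr (lin _ _); ring.
Qed.

Lemma prod_lin_tilde_phi : weights_ok a b ->
  \prod_(k < p) lin (z k) ((s2 (~~ bs))%:~R * (bt_ a b k)%:R * h)
  = shift h (s1 bs) (phi a b z h bs) * N.
Proof.
move=> wok; rewrite rmorph_prod /=; apply: prod_lin_typical => k tk.
  by rewrite /bt_ (negbTE tk).
have [m am] : exists m, a k = m.+1.
  case ak: (a k) => [|m]; last by exists m.
  by move: tk; rewrite /typicalk ak (wok _ ak).
by rewrite /bt_ tk am shift_lin mulrSr s2N; congr (lin _ _); ring.
Qed.

End TypicalFactors.

Lemma signed_ratio_sum (K : fieldType) (s n d y Ys yt Yt P Q P' Q' : K) :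
  y != 0 -> (yt = 0 -> Yt = 0) -> y * Yt = P - Q -> Ys * yt = P' - Q' ->
  s * (P * n / d * (Ys / y)) + - s * (Q * n / d * (Ys / y))
  = - s * (Q' * n / d * (Yt / yt)) + s * (P' * n / d * (Yt / yt)).
Proof.
move=> y0 Yt0 yYt Ysyt.
transitivity (s * n / d * ((P - Q) * Ys / y)); first ring.
transitivity (s * n / d * ((P' - Q') * Yt / yt)); last ring.
rewrite -yYt -Ysyt; congr (_ * _).
have [yt0 | yt0] := eqVneq yt 0; first by rewrite Yt0 // yt0 !(mulr0, mul0r).
by field; rewrite y0 yt0.
Qed.

Theorem lemma4p4 (h : CC) (p : nat) (a b : 'I_p -> nat) (z : 'I_p -> CC)
    (bs : bool) (l : nat) (t : 'I_l -> CC) (ytil : {poly CC}) :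
  h != 0 ->
  weights_ok a b ->
  typical a b ->
  h_generic z h ->
  BAE_solution a b z h bs t ->
  let y := \prod_(j < l) ('X - (t j)%:P) in
  let S1 := s1 bs in let S2 := s2 bs in
  let St1 := s1 (~~ bs) in let St2 := s2 (~~ bs) in
  let T1 := Tpoly z h S1 a in let T2 := Tpoly z h S2 b in
  let Tt1 := Tpoly z h St1 (at_ a b) in let Tt2 := Tpoly z h St2 (bt_ a b) in
  y * shift h (- S1) ytil = phi a b z h bs - psi a b z h bs ->
  (S1%:~R * (rf (T1 * shift h S1 y) / rf (shift h S1 T1 * y))
   + S2%:~R * (rf (T2 * shift h (- S2) y) / rf (shift h S2 T2 * y)) : ratfun)
  = St1%:~R * (rf (Tt1 * shift h St1 ytil) / rf (shift h St1 Tt1 * ytil))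
   + St2%:~R * (rf (Tt2 * shift h (- St2) ytil) / rf (shift h St2 Tt2 * ytil)).
Proof.
move=> _ wok _ _ _ y S1 S2 St1 St2 T1 T2 Tt1 Tt2 yE.
rewrite !Tpoly_ratio (prod_lin_phi _ a b) (prod_lin_psi _ a b).
rewrite prod_lin_tilde_psi prod_lin_tilde_phi //.
rewrite /S2 /St1 /St2 s1N s2N /s2 opprK intrN /rf !tofracM.
apply: signed_ratio_sum.
- by rewrite tofrac_eq0 monic_neq0 ?monic_prod_XsubC.
- by move/eqP; rewrite tofrac_eq0 => /eqP->; rewrite rmorph0.
- by rewrite -tofracM yE tofracB.
- by rewrite -tofracB -rmorphB -yE rmorphM /= shiftK tofracM.
Qed.
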